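(* Let $(\mathcal{N},d)$ be a complete global Alexandrov NPC space and $T:\mathcal{N}\to\mathcal{N}$ a nonexpansive distance convex mapping. Then, for any $p\in\mathcal{N}$ whose orbit $\{p,Tp,T^2p,\ldots\}$ is bounded, and any $q\in\mathcal{N}$, the following are equivalent: (i) $Tq=q$ and $q\in\overline{co}\{p,Tp,T^2p,\ldots\}$; (ii) $q=\lim_{n\to\infty} m_n(p)$ (convergence in the metric $d$); (iii) $q$ is the weak limit of the sequence $(m_n(p))$; (iv) $q$ is a weak cluster point of the sequence $(m_n(p))$.
   Context: A metric space $(\mathcal{N},d)$ is a geodesic length space if any two points $p,q$ are joined by a rectifiable curve $\gamma:[0,1]\to\mathcal{N}$ with $\gamma(0)=p$, $\gamma(1)=q$ of length $d(p,q)$ (a geodesic). It is a global Alexandrov NPC space if for all $q\in\mathcal{N}$, every geodesic $\gamma:[0,1]\to\mathcal{N}$ and $0\le t\le 1$: $d^2(q,\gamma(t))\le (1-t)d^2(q,\gamma(0))+t d^2(q,\gamma(1))-t(1-t)l(\gamma)^2$, where $l(\gamma)$ is the length of $\gamma$. In such spaces geodesics between two points are unique. A subset is convex if any two of its points are joined by a geodesic contained in it; $co(S)$ is the smallest convex set containing $S$, and $\overline{co}(S)$ its closure. $T$ is nonexpansive if $d(Tp,Tq)\le d(p,q)$ for all $p,q$. For $r,p\in\mathcal{N}$ and $n\ge1$ let $F_n(r,p)=\frac1n\sum_{i=0}^{n-1}d^2(r,T^ip)$, and let $m_n(p)$ be the unique minimizer of $F_n(\cdot,p)$ (it exists in a complete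 global Alexandrov NPC space). $T$ is distance convex if for all $n\in\mathbb{N}$ and $q\in\mathcal{N}$ the function $r\mapsto d^2(m_n(r),q)$ is convex on $\mathcal{N}$, i.e. its composition with every geodesic $[0,1]\to\mathcal{N}$ is convex. For $x\in\mathcal{N}$ and a geodesic arc $\gamma$, the projection $\pi(x,\gamma)$ is the unique point of $\gamma$ closest to $x$. A sequence $(p_n)$ converges weakly to $q$ if for every geodesic arc $\gamma$ through $q$, $\pi(p_n,\gamma)\to q$. A point $q$ is a weak cluster point of $(p_n)$ if for every neighborhood $U$ of $q$ there are infinitely many $n$ such that $\pi(p_n,\gamma)\in U$ for every geodesic arc $\gamma$ through $q$. *)

From Stdlib Require Import Reals Lra Lia ClassicalEpsilon.
Open Scope R_scope.

Section NPC.
Context {X : Type} (d : X -> X -> R).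

Definition is_metric : Prop :=
  (forall x y, 0 <= d x y) /\ (forall x y, d x y = 0 <-> x = y) /\
  (forall x y, d x y = d y x) /\ (forall x y z, d x z <= d x y + d y z).

Definition seq_cvg (u : nat -> X) (l : X) : Prop :=
  forall eps, 0 < eps -> exists N, forall n, (N <= n)%nat -> d (u n) l < eps.

Definition complete : Prop :=
  forall u : nat -> X,
    (forall eps, 0 < eps -> exists N, forall m n, (N <= m)%nat -> (N <= n)%nat ->
        d (u m) (u n) < eps) ->
    exists l, seq_cvg u l.

(** A geodesic [0,1] -> N (parametrized proportionally to arc length, so that
    its length l(gamma) equals d(gamma 0, gamma 1)); values outside [0,1]
    are irrelevant. *)
Definition geodesic (g : R -> X) : Prop :=
  forall s t, 0 <= s <= 1 -> 0 <= t <= 1 -> d (g s) (g t) = Rabs (s - t) * d (g 0) (g 1).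

Definition geodesic_length_space : Prop :=
  forall p q, exists g, geodesic g /\ g 0 = p /\ g 1 = q.

(** global Alexandrov NPC inequality; l(gamma) = d(gamma 0, gamma 1) *)
Definition NPC_ineq : Prop :=
  forall q g t, geodesic g -> 0 <= t <= 1 ->
    (d q (g t))^2 <= (1 - t) * (d q (g 0))^2 + t * (d q (g 1))^2
                      - t * (1 - t) * (d (g 0) (g 1))^2.

Definition complete_NPC_space : Prop :=
  is_metric /\ complete /\ geodesic_length_space /\ NPC_ineq.

Definition convex (C : X -> Prop) : Prop :=
  forall p q, C p -> C q ->
    exists g, geodesic g /\ g 0 = p /\ g 1 = q /\ forall t, 0 <= t <= 1 -> C (g t).

Definition co (S : X -> Prop) (x : X) : Prop :=
  forall C, convex C -> (forall y, S y -> C y) -> C x.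

Definition closed_co (S : X -> Prop) (x : X) : Prop :=
  forall eps, 0 < eps -> exists y, co S y /\ d x y < eps.

Definition nonexpansive (T : X -> X) : Prop := forall p q, d (T p) (T q) <= d p q.

Fixpoint sumR (n : nat) (f : nat -> R) : R :=
  match n with O => 0 | S k => sumR k f + f k end.

Definition Fn (T : X -> X) (n : nat) (r p : X) : R :=
  / INR n * sumR n (fun i => (d r (Nat.iter i T p))^2).

Definition m_n (T : X -> X) (n : nat) (p : X) : X :=
  epsilon (inhabits p) (fun m => forall r, Fn T n m p <= Fn T n r p).

Definition convex_on01 (f : R -> R) : Prop :=
  forall s t l, 0 <= s <= 1 -> 0 <= t <= 1 -> 0 <= l <= 1 ->
    f ((1 - l) * s + l * t) <= (1 - l) * f s + l * f t.

Definition distance_convex (T : X -> X) : Prop :=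
  forall (n : nat) (q : X), (1 <= n)%nat ->
    forall g, geodesic g -> convex_on01 (fun t => (d (m_n T n (g t)) q)^2).

Definition proj (g : R -> X) (x : X) : X :=
  g (epsilon (inhabits 0)
       (fun t => 0 <= t <= 1 /\ forall s, 0 <= s <= 1 -> d x (g t) <= d x (g s))).

Definition through (g : R -> X) (q : X) : Prop := exists t, 0 <= t <= 1 /\ g t = q.

Definition weak_cvg (u : nat -> X) (q : X) : Prop :=
  forall g, geodesic g -> through g q -> seq_cvg (fun n => proj g (u n)) q.

Definition weak_cluster (u : nat -> X) (q : X) : Prop :=
  forall eps, 0 < eps -> forall N, exists n, (N <= n)%nat /\
    forall g, geodesic g -> through g q -> d (proj g (u n)) q < eps.

Definition orbit (T : X -> X) (p : X) (x : X) : Prop := exists i, x = Nat.iter i T p.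

Definition bounded_orbit (T : X -> X) (p : X) : Prop :=
  exists M, forall i, d p (Nat.iter i T p) <= M.

End NPC.

(* The function [x |-> sum_{i<n} d(x, T^i p)^2] is [n/2]-strongly convex along
   geodesics (NPC inequality at midpoints), so its minimizer [m_n(p)] exists and
   every other point raises the sum by [n/2 d(x, m_n(p))^2].  The sums for the
   orbits of [r] and [T r] differ in two terms, which gives
   [d(m_n(T r), m_n(r))^2 = O(1/n)] and [d(T m_n(p), m_n(p))^2 = O(1/n)]: cluster
   points of [(m_n(p))] are fixed points, and they lie in the closed convex hull of
   the orbit because each [m_n(p)] lies in the closure of every convex set containing
   the orbit.  Conversely, by distance convexity the points [r] with
   [d(m_n(r), m_n(p))^2 = O(1/n)] form a convex set containing the orbit, hence its
   convex hull; for a fixed point [q] of the closed hull pick such an [r] near [q],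
   and nonexpansiveness gives [d(m_n(r), q) <= 2 d(r, q)], so [m_n(p) -> q].
   Finally a weak limit [q] satisfies the Opial-type inequality
   [d(m_n, q)^2 + d(q, z)^2 / 2 <= d(m_n, z)^2 + o(1)] for every [z]; with [z = T q]
   this forces [T q = q], and with [z] an approximate projection of [q] onto the
   hull it forces [q] into the closed hull.  Weak cluster points are cluster points,
   since one may test against the geodesic from [q] to [m_n(p)] itself. *)

From Stdlib Require Import Reals Lra Lia Psatz ClassicalEpsilon Classical.
Open Scope R_scope.

Lemma sumR_le (n : nat) (f g : nat -> R) :
  (forall i, (i < n)%nat -> f i <= g i) -> sumR n f <= sumR n g.
Proof.
  induction n as [|n IH]; intros Hfg; cbn [sumR]; [lra|].
  assert (f n <= g n) by (apply Hfg; lia).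
  assert (sumR n f <= sumR n g) by (apply IH; intros; apply Hfg; lia).
  lra.
Qed.

Lemma sumR_ext (n : nat) (f g : nat -> R) :
  (forall i, (i < n)%nat -> f i = g i) -> sumR n f = sumR n g.
Proof.
  induction n as [|n IH]; intros Hfg; cbn [sumR]; [reflexivity|].
  rewrite IH by (intros; apply Hfg; lia). rewrite Hfg by lia. reflexivity.
Qed.

Lemma sumR_affine (n : nat) (a b : R) (f : nat -> R) :
  sumR n (fun i => a + b * f i) = INR n * a + b * sumR n f.
Proof. induction n as [|n IH]; cbn [sumR]; [simpl; ring|]. rewrite IH, S_INR. ring. Qed.

Lemma sumR_add (n : nat) (f g : nat -> R) :
  sumR n (fun i => f i + g i) = sumR n f + sumR n g.
Proof. induction n as [|n IH]; cbn [sumR]; [ring|]. rewrite IH. ring. Qed.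

Lemma sumR_const (n : nat) (c : R) : sumR n (fun _ => c) = INR n * c.
Proof.
  rewrite <- (Rplus_0_r (INR n * c)), <- (Rmult_0_l (sumR n (fun _ => 0))), <- sumR_affine.
  apply sumR_ext. intros; ring.
Qed.

Lemma sumR_shift (n : nat) (f : nat -> R) :
  sumR n (fun i => f (S i)) = sumR n f - f 0%nat + f n.
Proof. induction n as [|n IH]; cbn [sumR]; [ring|]. rewrite IH. ring. Qed.

Lemma inv_INR_S_eventually_lt (e : R) :
  0 < e -> exists N, forall k, (N <= k)%nat -> / (INR k + 1) < e.
Proof.
  intros He. destruct (INR_archimed e 1 He) as [N HN]. exists N. intros k Hk.
  apply le_INR in Hk. pose proof (pos_INR k).
  apply (Rmult_lt_reg_l (INR k + 1)); [lra|]. rewrite Rinv_r by lra. nra.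
Qed.

Lemma pow2_le_reg (x y : R) : 0 <= y -> x ^ 2 <= y ^ 2 -> x <= y.
Proof. intros Hy Hxy. destruct (Rle_lt_dec x y); [assumption|nra]. Qed.

Lemma pow2_lt_reg (x y : R) : 0 <= y -> x ^ 2 < y ^ 2 -> x < y.
Proof. intros Hy Hxy. destruct (Rlt_le_dec x y); [assumption|nra]. Qed.

Lemma Rle_div_of_mul_le (c x K : R) : 0 < c -> c * x <= K -> x <= K / c.
Proof.
  intros Hc Hx. apply (Rmult_le_reg_l c); [lra|].
  replace (c * (K / c)) with K by (field; lra). exact Hx.
Qed.

Lemma sq_le_div_eventually_lt (K e : R) : 0 <= K -> 0 < e ->
  exists N, forall n, (N <= n)%nat ->
    (1 <= n)%nat /\ forall x, x ^ 2 <= K / INR n -> x < e.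
Proof.
  intros HK He.
  assert (He2 : 0 < e ^ 2 / (K + 1)) by (apply Rdiv_lt_0_compat; [apply pow_lt|]; lra).
  destruct (inv_INR_S_eventually_lt _ He2) as [N HN]. exists (S N). intros [|k] Hk; [lia|].
  split; [lia|]. intros x Hx. rewrite S_INR in Hx. specialize (HN k ltac:(lia)).
  assert (Hk0 : 0 < INR k + 1) by (pose proof (pos_INR k); lra).
  apply pow2_lt_reg; [lra|]. apply (Rle_lt_trans _ (K * (e ^ 2 / (K + 1)))).
  - unfold Rdiv in *. apply (Rle_trans _ _ _ Hx), Rmult_le_compat_l; lra.
  - apply (Rmult_lt_reg_l (K + 1)); [lra|].
    replace ((K + 1) * (K * (e ^ 2 / (K + 1)))) with (K * e ^ 2) by (field; lra).
    assert (0 < e ^ 2) by (apply pow_lt; lra). nra.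
Qed.

Lemma sq_le_div_INR_nonneg (u : nat -> R) (K : R) :
  (forall n, (1 <= n)%nat -> u n ^ 2 <= K / INR n) -> 0 <= K.
Proof.
  intros H. specialize (H 1%nat (le_n 1)). simpl INR in H. unfold Rdiv in H. rewrite Rinv_1 in H.
  pose proof (pow2_ge_0 (u 1%nat)). lra.
Qed.

Lemma Rle_0_of_le_mult_small (a K : R) :
  0 <= K -> (forall t, 0 < t <= 1 -> a <= t * K) -> a <= 0.
Proof.
  intros HK H. destruct (Rle_lt_dec a 0) as [|Ha]; [assumption|].
  set (t := Rmin 1 (a / (K + 1))).
  assert (Ht : 0 < t <= 1).
  { split; [apply Rmin_pos; [lra|apply Rdiv_lt_0_compat; lra]|apply Rmin_l]. }
  assert (t * (K + 1) <= a).
  { apply (Rle_trans _ (a / (K + 1) * (K + 1))); [apply Rmult_le_compat_r; [lra|apply Rmin_r]|].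
    right; field; lra. }
  specialize (H t Ht). nra.
Qed.

Lemma ex_inf_nonneg (A : Type) (P : A -> Prop) (f : A -> R) (a0 : A) :
  P a0 -> (forall a, P a -> 0 <= f a) ->
  exists m, 0 <= m /\ (forall a, P a -> m <= f a) /\
    (forall e, 0 < e -> exists a, P a /\ f a < m + e).
Proof.
  intros Ha0 Hpos.
  set (E := fun v => exists a, P a /\ v = - f a).
  assert (Hb : bound E) by (exists 0; intros v [a [Ha ->]]; specialize (Hpos a Ha); lra).
  destruct (completeness E Hb (ex_intro _ (- f a0) (ex_intro _ a0 (conj Ha0 eq_refl))))
    as [L [HL1 HL2]].
  assert (Hlow : forall a, P a -> - f a <= L) by (intros a Ha; apply HL1; exists a; auto).
  exists (- L). split; [|split].
  - assert (L <= 0) by (apply HL2; intros v [a [Ha ->]]; specialize (Hpos a Ha); lra). lra.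
  - intros a Ha. specialize (Hlow a Ha). lra.
  - intros e He. apply NNPP. intros Hno.
    assert (L <= L - e); [|lra].
    apply HL2. intros v [a [Ha ->]].
    destruct (Rlt_dec (f a) (- L + e)); [exfalso; apply Hno; exists a; auto|lra].
Qed.

Section Metric.
Context {X : Type} (d : X -> X -> R) (Hm : is_metric d).

Lemma d_nonneg x y : 0 <= d x y. Proof. apply Hm. Qed.
Lemma d_sym x y : d x y = d y x. Proof. apply Hm. Qed.
Lemma d_tri x y z : d x z <= d x y + d y z. Proof. apply Hm. Qed.
Lemma d_refl x : d x x = 0. Proof. apply Hm. reflexivity. Qed.
Lemma d_eq x y : d x y = 0 -> x = y. Proof. apply Hm. Qed.

Lemma d_eq_of_lt_all x y : (forall e, 0 < e -> d x y < e) -> x = y.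
Proof.
  intros H. apply d_eq. pose proof (d_nonneg x y).
  destruct (Rle_lt_dec (d x y) 0) as [|Hpos]; [lra|]. specialize (H _ Hpos). lra.
Qed.

Lemma Rabs_d_sub_le x a b : Rabs (d x a - d x b) <= d a b.
Proof.
  pose proof (d_tri x a b). pose proof (d_tri x b a). rewrite (d_sym b a) in *.
  apply Rabs_le. lra.
Qed.

Lemma d2_le_shift x w w' : (d x w') ^ 2 <= (d x w) ^ 2 + d w w' * (2 * d x w + d w w').
Proof.
  pose proof (d_tri x w w'). pose proof (d_nonneg x w'). pose proof (d_nonneg x w).
  pose proof (d_nonneg w w').
  assert ((d x w') ^ 2 <= (d x w + d w w') ^ 2) by (apply pow_incr; lra). nra.
Qed.

End Metric.

Section Geodesics.
Context {X : Type} (d : X -> X -> R) (Hm : is_metric d) (Hgl : geodesic_length_space d)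
  (Hn : NPC_ineq d).

Lemma geodesic_reparam (g : R -> X) (a b : R) : geodesic d g -> 0 <= a <= 1 -> 0 <= b <= 1 ->
  geodesic d (fun u => g (a + u * (b - a))).
Proof.
  intros Hg Ha Hb s t Hs Ht.
  replace (a + 0 * (b - a)) with a by ring. replace (a + 1 * (b - a)) with b by ring.
  assert (Hin : forall u, 0 <= u <= 1 -> 0 <= a + u * (b - a) <= 1) by (intros; split; nra).
  rewrite (Hg _ _ (Hin s Hs) (Hin t Ht)), (Hg _ _ Ha Hb).
  replace (a + s * (b - a) - (a + t * (b - a))) with ((s - t) * (b - a)) by ring.
  rewrite Rabs_mult, (Rabs_minus_sym a b). ring.
Qed.

Lemma geodesic_unique (g h : R -> X) : geodesic d g -> geodesic d h ->
  g 0 = h 0 -> g 1 = h 1 -> forall t, 0 <= t <= 1 -> g t = h t.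
Proof.
  intros Hg Hh E0 E1 t Ht.
  pose proof (Hn (h t) g t Hg Ht) as N.
  rewrite E0, E1, (Hh t 0 Ht), (Hh t 1 Ht) in N by lra.
  rewrite Rabs_right, Rabs_left1 in N by lra.
  assert (d (h t) (g t) ^ 2 <= 0) by nra.
  pose proof (d_nonneg d Hm (h t) (g t)).
  symmetry. apply (d_eq d Hm). nra.
Qed.

Lemma co_convex (S : X -> Prop) : convex d (co d S).
Proof.
  intros x y Hx Hy. destruct (Hgl x y) as [g [Hg [G0 G1]]].
  exists g. repeat split; [exact Hg|exact G0|exact G1|].
  intros t Ht C HC HS. destruct (HC x y (Hx C HC HS) (Hy C HC HS)) as [h [Hh [H0 [H1 Hin]]]].
  rewrite (geodesic_unique g h Hg Hh) by congruence. auto.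
Qed.

Definition clamp01 (t : R) : R := Rmax 0 (Rmin 1 t).

Lemma clamp01_id t : 0 <= t <= 1 -> clamp01 t = t.
Proof. unfold clamp01, Rmax, Rmin. intros. repeat destruct Rle_dec; lra. Qed.

Lemma clamp01_range t : 0 <= clamp01 t <= 1.
Proof. unfold clamp01, Rmax, Rmin. repeat destruct Rle_dec; lra. Qed.

Lemma Rabs_clamp01_le t s : Rabs (clamp01 t - clamp01 s) <= Rabs (t - s).
Proof.
  unfold clamp01, Rmax, Rmin. repeat destruct Rle_dec; unfold Rabs; repeat destruct Rcase_abs; lra.
Qed.

Lemma ex_nearest_param (g : R -> X) (x : X) : geodesic d g ->
  exists t, 0 <= t <= 1 /\ forall s, 0 <= s <= 1 -> d x (g t) <= d x (g s).
Proof.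
  intros Hg. set (f := fun t => d x (g (clamp01 t))). set (L := d (g 0) (g 1)).
  assert (HL : 0 <= L) by apply (d_nonneg d Hm).
  (* [f] is [L]-Lipschitz, hence continuous, and attains its minimum on [0,1]. *)
  assert (Hf : forall a b, Rabs (f a - f b) <= L * Rabs (a - b)).
  { intros a b. eapply Rle_trans; [apply (Rabs_d_sub_le d Hm)|].
    rewrite (Hg _ _ (clamp01_range a) (clamp01_range b)), (Rmult_comm L).
    apply Rmult_le_compat_r; [exact HL|apply Rabs_clamp01_le]. }
  destruct (continuity_ab_min f 0 1) as [t [Hmin Ht]]; [lra| |].
  { intros c _ eps Heps. exists (eps / (L + 1)). split; [apply Rdiv_lt_0_compat; lra|].
    intros y [_ Hy]. simpl in *. unfold R_dist in *.
    apply (Rle_lt_trans _ _ _ (Hf y c)).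
    apply (Rle_lt_trans _ (L * (eps / (L + 1)))); [apply Rmult_le_compat_l; lra|].
    apply (Rmult_lt_reg_l (L + 1)); [lra|].
    replace ((L + 1) * (L * (eps / (L + 1)))) with (L * eps) by (field; lra). nra. }
  exists t. split; [exact Ht|]. intros s Hs. specialize (Hmin s Hs). unfold f in Hmin.
  rewrite !clamp01_id in Hmin by assumption. exact Hmin.
Qed.

Lemma proj_spec (g : R -> X) (x : X) : geodesic d g ->
  exists t, 0 <= t <= 1 /\ proj d g x = g t /\
    forall s, 0 <= s <= 1 -> d x (g t) <= d x (g s).
Proof.
  intros Hg. pose proof (epsilon_spec (inhabits 0) _ (ex_nearest_param g x Hg)) as [Ht Hmin].
  eexists. split; [exact Ht|]. split; [reflexivity|exact Hmin].
Qed.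

(* The NPC inequality at the midpoint between [proj g x] and [g s] sharpens the
   minimality of the projection by a quadratic term. *)
Lemma proj_ineq (g : R -> X) (x : X) (s : R) : geodesic d g -> 0 <= s <= 1 ->
  (d x (proj d g x)) ^ 2 + / 2 * (d (proj d g x) (g s)) ^ 2 <= (d x (g s)) ^ 2.
Proof.
  intros Hg Hs. destruct (proj_spec g x Hg) as [t [Ht [-> Hmin]]].
  pose proof (Hn x _ (/ 2) (geodesic_reparam g t s Hg Ht Hs) ltac:(lra)) as N. cbv beta in N.
  replace (t + 0 * (s - t)) with t in N by ring. replace (t + 1 * (s - t)) with s in N by ring.
  specialize (Hmin (t + / 2 * (s - t)) ltac:(split; nra)).
  pose proof (d_nonneg d Hm x (g t)).
  assert ((d x (g t)) ^ 2 <= (d x (g (t + / 2 * (s - t)))) ^ 2) by (apply pow_incr; lra).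
  lra.
Qed.

Lemma proj_d2_le (g : R -> X) (x : X) (s : R) : geodesic d g -> 0 <= s <= 1 ->
  (d (proj d g x) (g s)) ^ 2 <= 2 * (d x (g s)) ^ 2.
Proof.
  intros Hg Hs. pose proof (proj_ineq g x s Hg Hs). pose proof (pow2_ge_0 (d x (proj d g x))). lra.
Qed.

(* Opial-type inequality: a point projecting near [g 0] is farther from [g 1] than
   from [g 0] by about [d(g 0, g 1)^2 / 2]. *)
Lemma proj_near_start_ineq (g : R -> X) (x : X) : geodesic d g ->
  (d x (g 0)) ^ 2 + / 2 * (d (g 0) (g 1) - d (proj d g x) (g 0)) ^ 2
    <= (d x (g 1)) ^ 2 + d (proj d g x) (g 0) * (2 * d x (g 0) + d (proj d g x) (g 0)).
Proof.
  intros Hg.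
  pose proof (proj_ineq g x 0 Hg ltac:(lra)) as P0. pose proof (proj_ineq g x 1 Hg ltac:(lra)) as P1.
  set (pi := proj d g x) in *. set (q := g 0) in *. set (z := g 1) in *.
  set (a := d x pi) in *. set (f := d pi q) in *.
  pose proof (d_nonneg d Hm x pi). pose proof (d_nonneg d Hm pi q). pose proof (d_nonneg d Hm x q).
  assert (Ha : a <= d x q) by (apply pow2_le_reg; [lra|]; nra).
  assert (Hxq : d x q <= a + f) by apply (d_tri d Hm).
  assert (Hxq2 : (d x q) ^ 2 <= a ^ 2 + f * (2 * d x q + f)).
  { assert ((d x q) ^ 2 <= (a + f) ^ 2) by (apply pow_incr; lra). nra. }
  assert (HD : Rabs (d q z - f) <= d pi z).
  { pose proof (d_tri d Hm q pi z) as T1. pose proof (d_tri d Hm pi z q) as T2.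
    rewrite (d_sym d Hm q pi) in T1. rewrite (d_sym d Hm z q) in T2. fold f in T1, T2.
    apply Rabs_le. lra. }
  assert ((d q z - f) ^ 2 <= (d pi z) ^ 2).
  { rewrite <- (pow2_abs (d q z - f)). apply pow_incr. split; [apply Rabs_pos|exact HD]. }
  lra.
Qed.

End Geodesics.

Section SqDistSum.
Context {X : Type} (d : X -> X -> R) (Hm : is_metric d) (Hc : complete d)
  (Hgl : geodesic_length_space d) (Hn : NPC_ineq d).

Definition sqdist_sum (n : nat) (y : nat -> X) (x : X) : R := sumR n (fun i => (d x (y i)) ^ 2).

Lemma sqdist_sum_nonneg n y x : 0 <= sqdist_sum n y x.
Proof.
  rewrite <- (Rmult_0_r (INR n)), <- sumR_const. apply sumR_le. intros. apply pow2_ge_0.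
Qed.

Lemma sqdist_sum_midpoint n y a b : exists c,
  sqdist_sum n y c + INR n / 4 * (d a b) ^ 2 <= / 2 * sqdist_sum n y a + / 2 * sqdist_sum n y b.
Proof.
  destruct (Hgl a b) as [g [Hg [G0 G1]]]. exists (g (/ 2)).
  assert (H : sumR n (fun i => (d (g (/ 2)) (y i)) ^ 2)
    <= sumR n (fun i => - (INR 1 / 4 * (d a b) ^ 2) + / 2 * ((d a (y i)) ^ 2 + (d b (y i)) ^ 2))).
  { apply sumR_le. intros i _. pose proof (Hn (y i) g (/ 2) Hg ltac:(lra)) as N.
    rewrite G0, G1, !(d_sym d Hm (y i)) in N. simpl INR. lra. }
  unfold sqdist_sum. rewrite sumR_affine, sumR_add in H. simpl INR in H. lra.
Qed.

Lemma sqdist_sum_le_near n y a b :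
  sqdist_sum n y a <= (1 + d a b) * sqdist_sum n y b + INR n * (d a b + (d a b) ^ 2).
Proof.
  unfold sqdist_sum. rewrite Rplus_comm, <- sumR_affine.
  apply sumR_le. intros i _.
  pose proof (d2_le_shift d Hm (y i) b a) as H. rewrite !(d_sym d Hm (y i)), (d_sym d Hm b a) in H.
  pose proof (d_nonneg d Hm a b). pose proof (pow2_ge_0 (d b (y i) - 1)). nra.
Qed.

Lemma sqdist_sum_lim_le n y (z : nat -> X) (l : X) (m : R) : 0 <= m -> seq_cvg d z l ->
  (forall k, sqdist_sum n y (z k) < m + / (INR k + 1)) -> sqdist_sum n y l <= m.
Proof.
  intros Hm0 Hl Hzk. apply Rle_plus_epsilon. intros e He.
  set (A := m + 1 + 2 * INR n).
  assert (HA : 0 < A) by (pose proof (pos_INR n); unfold A; lra).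
  destruct (Hl (Rmin 1 (e / (2 * A)))) as [N1 HN1].
  { apply Rmin_pos; [lra|]. apply Rdiv_lt_0_compat; lra. }
  destruct (inv_INR_S_eventually_lt (e / 2)) as [N2 HN2]; [lra|].
  set (k := Nat.max N1 N2).
  specialize (HN1 k (Nat.le_max_l _ _)). specialize (HN2 k (Nat.le_max_r _ _)).
  pose proof (sqdist_sum_le_near n y l (z k)) as Hnear. rewrite (d_sym d Hm l) in Hnear.
  pose proof (Hzk k). pose proof (sqdist_sum_nonneg n y (z k)).
  set (r := d (z k) l) in *. pose proof (d_nonneg d Hm (z k) l) as Hr0. fold r in Hr0.
  assert (Hr1 : r <= 1) by (pose proof (Rmin_l 1 (e / (2 * A))); lra).
  assert (HrA : r * A <= e / 2).
  { apply (Rle_trans _ (e / (2 * A) * A)).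
    - apply Rmult_le_compat_r; [lra|]. pose proof (Rmin_r 1 (e / (2 * A))). lra.
    - right. field. lra. }
  set (ik := / (INR k + 1)) in *.
  assert (0 < ik <= 1).
  { unfold ik. pose proof (pos_INR k). split; [apply Rinv_0_lt_compat; lra|].
    rewrite <- Rinv_1. apply Rinv_le_contravar; lra. }
  assert (r * sqdist_sum n y (z k) <= r * (m + 1)) by (apply Rmult_le_compat_l; lra).
  assert (INR n * (r + r ^ 2) <= INR n * (2 * r)) by (apply Rmult_le_compat_l; [apply pos_INR|nra]).
  unfold A in *. nra.
Qed.

(* A minimizing sequence is Cauchy by the midpoint inequality. *)
Lemma ex_sqdist_sum_min n y : (1 <= n)%nat -> exists z, forall x, sqdist_sum n y z <= sqdist_sum n y x.
Proof.
  intros Hn1. assert (Hn0 : 1 <= INR n) by (apply (le_INR 1); auto).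
  destruct (ex_inf_nonneg X (fun _ => True) (sqdist_sum n y) (y 0%nat) I
              (fun a _ => sqdist_sum_nonneg n y a)) as [m [Hm0 [Hm1 Hm2]]].
  assert (Hz : forall k : nat, exists z, sqdist_sum n y z < m + / (INR k + 1)).
  { intros k. destruct (Hm2 (/ (INR k + 1))) as [z [_ Hz]]; [|eauto].
    apply Rinv_0_lt_compat. pose proof (pos_INR k). lra. }
  destruct (choice _ Hz) as [z Hzk].
  assert (Hcau : forall j k, (d (z j) (z k)) ^ 2 < 2 * (/ (INR j + 1) + / (INR k + 1))).
  { intros j k. destruct (sqdist_sum_midpoint n y (z j) (z k)) as [c Hmid].
    pose proof (Hm1 c I). pose proof (Hzk j). pose proof (Hzk k).
    assert (INR n / 4 * d (z j) (z k) ^ 2 < / 2 * / (INR j + 1) + / 2 * / (INR k + 1)) by lra.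
    pose proof (pow2_ge_0 (d (z j) (z k))). nra. }
  destruct (Hc z) as [l Hl].
  { intros e He. destruct (inv_INR_S_eventually_lt (e ^ 2 / 4)) as [N HN]; [nra|].
    exists N. intros j k Hj Hk. specialize (HN _ Hj) as Hj'. specialize (HN _ Hk) as Hk'.
    specialize (Hcau j k). apply pow2_lt_reg; [lra|]. lra. }
  exists l. intros x. apply (Rle_trans _ m); [|exact (Hm1 x I)].
  exact (sqdist_sum_lim_le n y z l m Hm0 Hl Hzk).
Qed.

Lemma sqdist_sum_strong n y z x : (forall w, sqdist_sum n y z <= sqdist_sum n y w) ->
  sqdist_sum n y z + INR n / 2 * (d x z) ^ 2 <= sqdist_sum n y x.
Proof.
  intros Hz. destruct (sqdist_sum_midpoint n y z x) as [c Hc']. specialize (Hz c).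
  rewrite (d_sym d Hm x z). lra.
Qed.

End SqDistSum.

Section ConvexSets.
Context {X : Type} (d : X -> X -> R) (Hm : is_metric d) (Hn : NPC_ineq d).

(* Approximate nearest points [c] of a convex set [C] to [b], with the
   variational inequality that an exact projection would satisfy up to [eta / t]. *)
Lemma approx_proj_convex (C : X -> Prop) (b c0 : X) : convex d C -> C c0 ->
  exists D, 0 <= D /\ (forall c, C c -> D <= (d b c) ^ 2) /\
    forall eta, 0 < eta -> exists c, C c /\ (d b c) ^ 2 < D + eta /\
      forall w, C w -> forall t, 0 < t <= 1 -> D + (1 - t) * (d c w) ^ 2 <= (d b w) ^ 2 + eta / t.
Proof.
  intros HC Hc0.
  destruct (ex_inf_nonneg X C (fun c => (d b c) ^ 2) c0 Hc0 (fun c _ => pow2_ge_0 _))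
    as [D [HD0 [HD1 HD2]]].
  exists D. split; [exact HD0|]. split; [exact HD1|].
  intros eta Heta. destruct (HD2 eta Heta) as [c [Hc Hbc]]. exists c. repeat split; [exact Hc|exact Hbc|].
  intros w Hw t Ht. destruct (HC c w Hc Hw) as [g [Hg [G0 [G1 Hin]]]].
  pose proof (Hn b g t Hg ltac:(lra)) as N. rewrite G0, G1 in N.
  pose proof (HD1 _ (Hin t ltac:(lra))).
  apply (Rmult_le_reg_l t); [lra|].
  replace (t * ((d b w) ^ 2 + eta / t)) with (t * (d b w) ^ 2 + eta) by (field; lra).
  assert ((1 - t) * (d b c) ^ 2 <= (1 - t) * (D + eta)) by (apply Rmult_le_compat_l; lra).
  nra.
Qed.

Lemma not_closed_co_gap (S : X -> Prop) (q : X) :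
  ~ closed_co d S q -> exists eps0, 0 < eps0 /\ forall y, co d S y -> eps0 <= d q y.
Proof.
  intros Hout. destruct (not_all_ex_not _ _ Hout) as [eps0 Heps0].
  apply imply_to_and in Heps0 as [Heps0 Hfar]. exists eps0. split; [exact Heps0|].
  intros y Hy. apply Rnot_lt_le. intros Hl. apply Hfar. exists y. auto.
Qed.

Lemma closure_ineq (C : X -> Prop) (A al beta : R) (b c w : X) : 0 <= al <= 1 ->
  (forall r, 0 < r -> exists w', C w' /\ d w w' < r) ->
  (forall w', C w' -> A + al * (d c w') ^ 2 <= (d b w') ^ 2 + beta) ->
  A + al * (d c w) ^ 2 <= (d b w) ^ 2 + beta.
Proof.
  intros Hal Hcl HC.
  pose proof (d_nonneg d Hm c w). pose proof (d_nonneg d Hm b w).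
  enough (A + al * (d c w) ^ 2 - (d b w) ^ 2 - beta <= 0) by lra.
  apply (Rle_0_of_le_mult_small _ (2 * d c w + 2 * d b w + 4)); [lra|].
  intros t Ht. destruct (Hcl t ltac:(lra)) as [w' [Hw' Hr]]. specialize (HC w' Hw').
  pose proof (d_nonneg d Hm w w') as Hr0. set (r := d w w') in *.
  pose proof (d2_le_shift d Hm c w' w) as Ec. pose proof (d2_le_shift d Hm b w w') as Eb.
  pose proof (d_tri d Hm c w w') as Tc. rewrite (d_sym d Hm w' w) in Ec. fold r in Ec, Eb, Tc.
  assert (Ec' : (d c w) ^ 2 <= (d c w') ^ 2 + r * (2 * d c w + 3)) by nra.
  assert (al * (d c w) ^ 2 <= al * (d c w') ^ 2 + al * (r * (2 * d c w + 3)))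
    by (rewrite <- Rmult_plus_distr_l; apply Rmult_le_compat_l; lra).
  assert (al * (r * (2 * d c w + 3)) <= r * (2 * d c w + 3)) 
    by (rewrite <- (Rmult_1_l (r * _)) at 2; apply Rmult_le_compat_r; nra).
  nra.
Qed.

(* With [eta = t^2] the variational inequality summed over the points shows that
   the distance from the minimizer to [C] vanishes. *)
Lemma sqdist_sum_min_in_closure (C : X -> Prop) n y z :
  convex d C -> (1 <= n)%nat -> (forall i, (i < n)%nat -> C (y i)) ->
  (forall w, sqdist_sum d n y z <= sqdist_sum d n y w) ->
  forall eps, 0 < eps -> exists c, C c /\ d z c < eps.
Proof.
  intros HC Hn1 Hy Hz.
  assert (HnR : 1 <= INR n) by (apply (le_INR 1); auto).
  destruct (approx_proj_convex C z (y 0%nat) HC (Hy 0%nat ltac:(lia))) as [D [HD0 [HD1 HD2]]].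
  assert (HnD : INR n * D <= 0).
  { pose proof (sqdist_sum_nonneg d n y z).
    apply (Rle_0_of_le_mult_small _ (2 * sqdist_sum d n y z + 5 * INR n)); [lra|].
    intros t Ht. destruct (HD2 (t ^ 2)) as [c [_ [_ Hw]]]; [apply pow_lt; lra|].
    assert (Hsum : forall s, 0 < s <= 1 -> INR n * D + (1 - s) * sqdist_sum d n y c
                     <= INR n * (t ^ 2 / s) + 1 * sqdist_sum d n y z).
    { intros s Hs. unfold sqdist_sum. rewrite <- !sumR_affine.
      apply sumR_le. intros i Hi. specialize (Hw _ (Hy i Hi) s Hs). lra. }
    pose proof (Hsum t Ht) as S1. pose proof (Hsum (/ 2) ltac:(lra)) as S2.
    replace (t ^ 2 / t) with t in S1 by (field; lra).
    replace (t ^ 2 / / 2) with (2 * t ^ 2) in S2 by (field; lra).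
    rewrite Rmult_1_l in S1, S2.
    pose proof (Hz c). pose proof (pow2_ge_0 t).
    assert (INR n * t ^ 2 <= INR n) 
      by (rewrite <- (Rmult_1_r (INR n)) at 2; apply Rmult_le_compat_l; nra).
    assert (sqdist_sum d n y c <= 2 * sqdist_sum d n y z + 4 * INR n) by nra.
    nra. }
  assert (HD : D = 0) by nra.
  intros eps Heps. destruct (HD2 (eps ^ 2)) as [c [Hc [Hzc _]]]; [apply pow_lt; lra|].
  exists c. split; [exact Hc|]. apply pow2_lt_reg; lra.
Qed.

End ConvexSets.

Definition cluster {X : Type} (d : X -> X -> R) (u : nat -> X) (q : X) : Prop :=
  forall eps, 0 < eps -> forall N, exists n, (N <= n)%nat /\ d (u n) q < eps.

Section Sequences.
Context {X : Type} (d : X -> X -> R) (Hm : is_metric d) (Hgl : geodesic_length_space d)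
  (Hn : NPC_ineq d).

Lemma seq_cvg_cluster u q : seq_cvg d u q -> cluster d u q.
Proof.
  intros H eps Heps N. destruct (H eps Heps) as [N1 HN1].
  exists (Nat.max N N1). split; [lia|]. apply HN1. lia.
Qed.

Lemma proj_lt_of_lt g x q e : geodesic d g -> through g q -> d x q < e / 2 -> d (proj d g x) q < e.
Proof.
  intros Hg [s [Hs <-]] Hx. pose proof (proj_d2_le d Hm Hn g x s Hg Hs).
  pose proof (d_nonneg d Hm x (g s)). apply pow2_lt_reg; nra.
Qed.

Lemma seq_cvg_weak_cvg u q : seq_cvg d u q -> weak_cvg d u q.
Proof.
  intros Hcv g Hg Hq eps Heps. destruct (Hcv (eps / 2) ltac:(lra)) as [N HN].
  exists N. intros n Hn1. apply proj_lt_of_lt; auto.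
Qed.

Lemma seq_cvg_weak_cluster u q : seq_cvg d u q -> weak_cluster d u q.
Proof.
  intros Hcv eps Heps N. destruct (Hcv (eps / 2) ltac:(lra)) as [N1 HN1].
  exists (Nat.max N N1). split; [lia|]. intros g Hg Hq.
  apply proj_lt_of_lt; auto. apply HN1. lia.
Qed.

(* Test with the geodesic from [q] to [u n] itself, onto which [u n] projects to itself. *)
Lemma weak_cluster_cluster u q : weak_cluster d u q -> cluster d u q.
Proof.
  intros Hw eps Heps N. destruct (Hw eps Heps N) as [n [HnN Hall]]. exists n. split; [exact HnN|].
  destruct (Hgl q (u n)) as [g [Hg [G0 G1]]].
  specialize (Hall g Hg (ex_intro _ 0 (conj (conj (Rle_refl 0) Rle_0_1) G0))).
  destruct (proj_spec d Hm g (u n) Hg) as [t [Ht [Hpr Hmin]]].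
  specialize (Hmin 1 ltac:(lra)). rewrite G1, (d_refl d Hm) in Hmin.
  assert (E : g t = u n).
  { apply (d_eq d Hm). rewrite (d_sym d Hm). pose proof (d_nonneg d Hm (u n) (g t)). lra. }
  rewrite Hpr, E in Hall. exact Hall.
Qed.

Lemma weak_cvg_opial u q z R0 : weak_cvg d u q -> (forall n, (1 <= n)%nat -> d (u n) q <= R0) ->
  forall eps, 0 < eps -> exists N, forall n, (N <= n)%nat -> (1 <= n)%nat ->
    (d (u n) q) ^ 2 + / 2 * (d q z) ^ 2 <= (d (u n) z) ^ 2 + eps.
Proof.
  intros Hw HR eps Heps.
  assert (HR0 : 0 <= R0) by (pose proof (HR 1%nat (le_n 1)); pose proof (d_nonneg d Hm (u 1%nat) q); lra).
  pose proof (d_nonneg d Hm q z) as HD.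
  destruct (Hgl q z) as [g [Hg [G0 G1]]].
  set (rho := Rmin 1 (eps / (2 * R0 + 1 + d q z))).
  assert (Hrho : 0 < rho) by (apply Rmin_pos; [lra|apply Rdiv_lt_0_compat; lra]).
  assert (Hrho_eps : rho * (2 * R0 + 1 + d q z) <= eps).
  { apply (Rle_trans _ (eps / (2 * R0 + 1 + d q z) * (2 * R0 + 1 + d q z))).
    - apply Rmult_le_compat_r; [lra|apply Rmin_r].
    - right. field. lra. }
  destruct (Hw g Hg (ex_intro _ 0 (conj (conj (Rle_refl 0) Rle_0_1) G0)) rho Hrho) as [N HN].
  exists N. intros n HnN Hn1.
  pose proof (proj_near_start_ineq d Hm Hn g (u n) Hg) as Op. rewrite G0, G1 in Op.
  specialize (HN n HnN). specialize (HR n Hn1). cbv beta in HN.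
  pose proof (Rmin_l 1 (eps / (2 * R0 + 1 + d q z))) as Hrho1. fold rho in Hrho1.
  pose proof (d_nonneg d Hm (proj d g (u n)) q) as Hf0. pose proof (d_nonneg d Hm (u n) q).
  set (f := d (proj d g (u n)) q) in *.
  assert (f * (2 * d (u n) q + f + d q z) <= rho * (2 * R0 + 1 + d q z)).
  { apply Rmult_le_compat; lra. }
  nra.
Qed.

End Sequences.

Section Means.
Context {X : Type} (d : X -> X -> R) (Hm : is_metric d) (Hc : complete d)
  (Hgl : geodesic_length_space d) (Hn : NPC_ineq d) (T : X -> X) (HT : nonexpansive d T).

Definition traj (r : X) : nat -> X := fun i => Nat.iter i T r.

(* For [n = 0], [Fn] vanishes identically and [m_n] is an arbitrary point. *)
Lemma m_n_min n r : (1 <= n)%nat ->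
  forall w, sqdist_sum d n (traj r) (m_n d T n r) <= sqdist_sum d n (traj r) w.
Proof.
  intros Hn1. assert (Hn0 : 0 < / INR n) by (apply Rinv_0_lt_compat, lt_0_INR; lia).
  destruct (ex_sqdist_sum_min d Hm Hc Hgl Hn n (traj r) Hn1) as [z Hz].
  assert (Hex : exists m, forall r', Fn d T n m r <= Fn d T n r' r).
  { exists z. intros r'. apply Rmult_le_compat_l; [lra|apply Hz]. }
  intros w. pose proof (epsilon_spec (inhabits r) _ Hex w) as Hs.
  apply (Rmult_le_reg_l (/ INR n)); [exact Hn0|exact Hs].
Qed.

Lemma iter_nonexpansive i r r' : d (Nat.iter i T r) (Nat.iter i T r') <= d r r'.
Proof. induction i as [|i IH]; simpl; [lra|]. eapply Rle_trans; [apply HT|exact IH]. Qed.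

Lemma iter_fixed i q : T q = q -> Nat.iter i T q = q.
Proof. intros Hq. induction i as [|i IH]; simpl; [reflexivity|]. rewrite IH. exact Hq. Qed.

Lemma sqdist_sum_traj_shift n r x :
  sqdist_sum d n (traj (T r)) x = sqdist_sum d n (traj r) x - (d x r) ^ 2 + (d x (Nat.iter n T r)) ^ 2.
Proof.
  change (d x r) with (d x (Nat.iter 0 T r)).
  unfold sqdist_sum, traj. rewrite <- (sumR_shift n (fun j => d x (Nat.iter j T r) ^ 2)).
  apply sumR_ext. intros i _. rewrite <- Nat.iter_succ_r. reflexivity.
Qed.

Lemma iter_bounded_orbit r B k : (forall i, d r (Nat.iter i T r) <= B) ->
  forall i, d (Nat.iter k T r) (Nat.iter i T (Nat.iter k T r)) <= 2 * B.
Proof.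
  intros HB i. rewrite <- Nat.iter_add.
  pose proof (d_tri d Hm (Nat.iter k T r) r (Nat.iter (i + k) T r)).
  pose proof (HB k). pose proof (HB (i + k)%nat). rewrite (d_sym d Hm r) in *. lra.
Qed.

Lemma orbit_bound_nonneg r B : (forall i, d r (Nat.iter i T r) <= B) -> 0 <= B.
Proof. intros HB. specialize (HB 0%nat). simpl in HB. rewrite (d_refl d Hm) in HB. exact HB. Qed.

Lemma m_n_near n r B : (1 <= n)%nat -> (forall i, d r (Nat.iter i T r) <= B) ->
  d (m_n d T n r) r <= 2 * B.
Proof.
  intros Hn1 HB. assert (Hn0 : 0 < INR n) by (apply lt_0_INR; lia).
  pose proof (orbit_bound_nonneg r B HB).
  pose proof (sqdist_sum_strong d Hm Hgl Hn n (traj r) _ r (m_n_min n r Hn1)) as Hs.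
  assert (Hr : sqdist_sum d n (traj r) r <= INR n * B ^ 2).
  { rewrite <- sumR_const. apply sumR_le. intros i _. apply pow_incr.
    split; [apply (d_nonneg d Hm)|apply HB]. }
  pose proof (sqdist_sum_nonneg d n (traj r) (m_n d T n r)).
  apply pow2_le_reg; [lra|]. rewrite (d_sym d Hm).
  assert (INR n / 2 * (d r (m_n d T n r)) ^ 2 <= INR n * B ^ 2) by lra. nra.
Qed.

(* The sums for the orbits of [r] and [T r] differ in one term each. *)
Lemma m_n_shift n r B : (1 <= n)%nat -> (forall i, d r (Nat.iter i T r) <= B) ->
  (d (m_n d T n (T r)) (m_n d T n r)) ^ 2 <= 68 * B ^ 2 / INR n.
Proof.
  intros Hn1 HB. assert (Hn0 : 0 < INR n) by (apply lt_0_INR; lia).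
  pose proof (orbit_bound_nonneg r B HB).
  set (a := m_n d T n r). set (b := m_n d T n (T r)).
  pose proof (m_n_near n r B Hn1 HB) as Ha. fold a in Ha.
  pose proof (m_n_near n (T r) (2 * B) Hn1 (iter_bounded_orbit r B 1 HB)) as Hb. fold b in Hb.
  assert (HB1 : d (T r) r <= B) by (rewrite (d_sym d Hm); apply (HB 1%nat)).
  pose proof (d_tri d Hm b (T r) r). pose proof (d_tri d Hm a r (Nat.iter n T r)). pose proof (HB n).
  pose proof (sqdist_sum_strong d Hm Hgl Hn n (traj r) a b (m_n_min n r Hn1)) as S1.
  pose proof (m_n_min n (T r) Hn1 a) as S2. fold b in S2. rewrite !sqdist_sum_traj_shift in S2.
  pose proof (d_nonneg d Hm a (Nat.iter n T r)). pose proof (d_nonneg d Hm b r).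
  assert ((d a (Nat.iter n T r)) ^ 2 <= (3 * B) ^ 2) by (apply pow_incr; lra).
  assert ((d b r) ^ 2 <= (5 * B) ^ 2) by (apply pow_incr; lra).
  pose proof (pow2_ge_0 (d a r)). pose proof (pow2_ge_0 (d b (Nat.iter n T r))).
  apply Rle_div_of_mul_le; [exact Hn0|]. lra.
Qed.

(* [T] maps the mean of the orbit of [r] to a point whose sum for the orbit of [T r]
   is no larger. *)
Lemma m_n_asymp_fixed n r B : (1 <= n)%nat -> (forall i, d r (Nat.iter i T r) <= B) ->
  (d (T (m_n d T n r)) (m_n d T n r)) ^ 2 <= 18 * B ^ 2 / INR n.
Proof.
  intros Hn1 HB. assert (Hn0 : 0 < INR n) by (apply lt_0_INR; lia).
  pose proof (orbit_bound_nonneg r B HB).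
  set (a := m_n d T n r).
  pose proof (m_n_near n r B Hn1 HB) as Ha. fold a in Ha.
  pose proof (sqdist_sum_strong d Hm Hgl Hn n (traj r) a (T a) (m_n_min n r Hn1)) as S1.
  pose proof (sqdist_sum_traj_shift n r (T a)) as S2.
  assert (S3 : sqdist_sum d n (traj (T r)) (T a) <= sqdist_sum d n (traj r) a).
  { apply sumR_le. intros i _. unfold traj. rewrite <- Nat.iter_succ_r, Nat.iter_succ.
    apply pow_incr. split; [apply (d_nonneg d Hm)|apply HT]. }
  assert (E : d (T a) r <= 3 * B).
  { pose proof (d_tri d Hm (T a) (T r) r). pose proof (HT a r).
    pose proof (HB 1%nat) as HB1. simpl in HB1. rewrite (d_sym d Hm r) in HB1. lra. }
  pose proof (d_nonneg d Hm (T a) r).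
  assert ((d (T a) r) ^ 2 <= (3 * B) ^ 2) by (apply pow_incr; lra).
  pose proof (pow2_ge_0 (d (T a) (Nat.iter n T r))).
  apply Rle_div_of_mul_le; [exact Hn0|]. lra.
Qed.

Lemma m_n_fixed_close n y q : (1 <= n)%nat -> T q = q -> d (m_n d T n y) q <= 2 * d y q.
Proof.
  intros Hn1 Hq. assert (Hn0 : 0 < INR n) by (apply lt_0_INR; lia).
  pose proof (sqdist_sum_strong d Hm Hgl Hn n (traj y) _ q (m_n_min n y Hn1)) as Hs.
  assert (Hyq : sqdist_sum d n (traj y) q <= INR n * (d y q) ^ 2).
  { rewrite <- sumR_const. apply sumR_le. intros i _. unfold traj.
    rewrite <- (iter_fixed i q Hq) at 1. rewrite (d_sym d Hm y q).
    apply pow_incr. split; [apply (d_nonneg d Hm)|apply iter_nonexpansive]. }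
  pose proof (sqdist_sum_nonneg d n (traj y) (m_n d T n y)). pose proof (d_nonneg d Hm y q).
  apply pow2_le_reg; [lra|]. rewrite (d_sym d Hm).
  assert (INR n / 2 * (d q (m_n d T n y)) ^ 2 <= INR n * (d y q) ^ 2) by lra. nra.
Qed.

End Means.

Section Orbit.
Context {X : Type} (d : X -> X -> R) (Hm : is_metric d) (Hc : complete d)
  (Hgl : geodesic_length_space d) (Hn : NPC_ineq d) (T : X -> X) (HT : nonexpansive d T)
  (HDC : distance_convex d T) (p : X) (M : R) (HM : forall i, d p (Nat.iter i T p) <= M).

Let mp (n : nat) : X := m_n d T n p.

Definition asymp_close (r : X) : Prop :=
  exists K, forall n, (1 <= n)%nat -> (d (m_n d T n r) (mp n)) ^ 2 <= K / INR n.

Lemma asymp_close_convex : convex d asymp_close.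
Proof.
  intros a b [K1 H1] [K2 H2]. destruct (Hgl a b) as [g [Hg [G0 G1]]].
  exists g. repeat split; [exact Hg|exact G0|exact G1|].
  intros t Ht. exists (K1 + K2). intros n Hn1.
  pose proof (sq_le_div_INR_nonneg _ _ H1). pose proof (sq_le_div_INR_nonneg _ _ H2).
  assert (Hn0 : 0 < / INR n) by (apply Rinv_0_lt_compat, lt_0_INR; lia).
  pose proof (HDC n (mp n) Hn1 g Hg 0 1 t ltac:(lra) ltac:(lra) Ht) as Hcv. cbv beta in Hcv.
  replace ((1 - t) * 0 + t * 1) with t in Hcv by ring. rewrite G0, G1 in Hcv.
  specialize (H1 n Hn1). specialize (H2 n Hn1). unfold Rdiv in *. nra.
Qed.

Lemma asymp_close_iter k : asymp_close (Nat.iter k T p).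
Proof.
  induction k as [|k [K HK]].
  - exists 0. intros n _. simpl. rewrite (d_refl d Hm). unfold Rdiv. lra.
  - exists (2 * (68 * (2 * M) ^ 2) + 2 * K). intros n Hn1. rewrite Nat.iter_succ.
    pose proof (m_n_shift d Hm Hc Hgl Hn T n _ _ Hn1 (iter_bounded_orbit d Hm T p M k HM)) as Hs.
    specialize (HK n Hn1). set (r := Nat.iter k T p) in *.
    pose proof (d_tri d Hm (m_n d T n (T r)) (m_n d T n r) (mp n)).
    pose proof (d_nonneg d Hm (m_n d T n (T r)) (mp n)).
    set (x := d (m_n d T n (T r)) (m_n d T n r)) in *. set (y := d (m_n d T n r) (mp n)) in *.
    assert (Hxy : (d (m_n d T n (T r)) (mp n)) ^ 2 <= 2 * x ^ 2 + 2 * y ^ 2).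
    { apply (Rle_trans _ ((x + y) ^ 2)); [apply pow_incr; lra|]. pose proof (pow2_ge_0 (x - y)). lra. }
    unfold Rdiv in *. lra.
Qed.

Lemma hull_asymp_close y : co d (orbit T p) y -> asymp_close y.
Proof. intros Hy. apply Hy; [exact asymp_close_convex|]. intros x [k ->]. apply asymp_close_iter. Qed.

Lemma traj_in_hull i : co d (orbit T p) (traj T p i).
Proof. intros C _ HS. apply HS. exists i. reflexivity. Qed.

Lemma mp_in_hull_closure n : (1 <= n)%nat ->
  forall eps, 0 < eps -> exists c, co d (orbit T p) c /\ d (mp n) c < eps.
Proof.
  intros Hn1. apply (sqdist_sum_min_in_closure d Hn _ n (traj T p)); auto.
  - apply (co_convex d Hm Hgl Hn).
  - intros i _. apply traj_in_hull.
  - apply (m_n_min d Hm Hc Hgl Hn T n p Hn1).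
Qed.

Lemma mp_bounded q n : (1 <= n)%nat -> d (mp n) q <= 2 * M + d p q.
Proof.
  intros Hn1. pose proof (m_n_near d Hm Hc Hgl Hn T n p M Hn1 HM). pose proof (d_tri d Hm (mp n) p q).
  unfold mp in *. lra.
Qed.

Lemma mp_asymp_fixed e : 0 < e -> exists N, forall n, (N <= n)%nat ->
  (1 <= n)%nat /\ d (T (mp n)) (mp n) < e.
Proof.
  intros He. pose proof (orbit_bound_nonneg d Hm T p M HM).
  destruct (sq_le_div_eventually_lt (18 * M ^ 2) e) as [N HN]; [nra|exact He|].
  exists N. intros n HnN. destruct (HN n HnN) as [Hn1 Hsq]. split; [exact Hn1|].
  apply Hsq, (m_n_asymp_fixed d Hm Hc Hgl Hn T HT n p M Hn1 HM).
Qed.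

Lemma fixed_in_hull_seq_cvg q : T q = q -> closed_co d (orbit T p) q -> seq_cvg d mp q.
Proof.
  intros Hq Hcl eps Heps.
  destruct (Hcl (eps / 4)) as [y [Hy Hqy]]; [lra|].
  destruct (hull_asymp_close y Hy) as [K HK].
  pose proof (sq_le_div_INR_nonneg _ _ HK) as HK0.
  destruct (sq_le_div_eventually_lt K (eps / 4)) as [N HN]; [exact HK0|lra|].
  exists N. intros n HnN. destruct (HN n HnN) as [Hn1 Hsq].
  pose proof (Hsq _ (HK n Hn1)).
  pose proof (m_n_fixed_close d Hm Hc Hgl Hn T HT n y q Hn1 Hq).
  pose proof (d_tri d Hm (mp n) (m_n d T n y) q) as Htri.
  rewrite (d_sym d Hm q) in Hqy. rewrite (d_sym d Hm (mp n) (m_n d T n y)) in Htri. lra.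
Qed.

Lemma cluster_fixed_in_hull q : cluster d mp q -> T q = q /\ closed_co d (orbit T p) q.
Proof.
  intros Hcl. split.
  - apply (d_eq_of_lt_all d Hm). intros e He.
    destruct (mp_asymp_fixed (e / 3)) as [N HN]; [lra|].
    destruct (Hcl (e / 3) ltac:(lra) N) as [n [HnN Hd]]. destruct (HN n HnN) as [_ Hfix].
    pose proof (d_tri d Hm (T q) (T (mp n)) q). pose proof (d_tri d Hm (T (mp n)) (mp n) q).
    pose proof (HT q (mp n)) as HTq. rewrite (d_sym d Hm q (mp n)) in HTq. lra.
  - intros e He. destruct (Hcl (e / 2) ltac:(lra) 1%nat) as [n [Hn1 Hd]].
    destruct (mp_in_hull_closure n Hn1 (e / 2)) as [c [Hc1 Hc2]]; [lra|].
    exists c. split; [exact Hc1|].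
    pose proof (d_tri d Hm q (mp n) c) as Htri. rewrite (d_sym d Hm q (mp n)) in Htri. lra.
Qed.

(* The Opial inequality towards [T q] contradicts [d (mp n) (T q) <= d (mp n) q + o(1)]. *)
Lemma weak_cvg_fixed q : weak_cvg d mp q -> T q = q.
Proof.
  intros Hw. set (R0 := 2 * M + d p q).
  assert (HR0 : 0 <= R0)
    by (unfold R0; pose proof (mp_bounded q 1 (le_n 1)); pose proof (d_nonneg d Hm (mp 1) q); lra).
  enough (HD : / 2 * (d q (T q)) ^ 2 <= 0).
  { symmetry. apply (d_eq d Hm). pose proof (d_nonneg d Hm q (T q)). nra. }
  apply Rle_plus_epsilon. intros eta Heta.
  destruct (weak_cvg_opial d Hm Hgl Hn mp q (T q) R0 Hw (mp_bounded q) (eta / 2)) as [N1 HN1]; [lra|].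
  set (delta := Rmin 1 (eta / (2 * (2 * R0 + 1)))).
  assert (Hdelta : delta * (2 * R0 + 1) <= eta / 2).
  { apply (Rle_trans _ (eta / (2 * (2 * R0 + 1)) * (2 * R0 + 1))).
    - apply Rmult_le_compat_r; [lra|apply Rmin_r].
    - right. field. lra. }
  destruct (mp_asymp_fixed delta) as [N2 HN2]; [apply Rmin_pos; [lra|apply Rdiv_lt_0_compat; lra]|].
  set (n := Nat.max N1 N2). destruct (HN2 n ltac:(lia)) as [Hn1 Hfix].
  specialize (HN1 n ltac:(lia) Hn1). pose proof (mp_bounded q n Hn1) as Hbd. fold R0 in Hbd.
  pose proof (Rmin_l 1 (eta / (2 * (2 * R0 + 1)))) as Hdelta1. fold delta in Hdelta1.
  set (m := mp n) in *.
  assert (HmTq : d m (T q) <= d (T m) m + d m q).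
  { pose proof (d_tri d Hm m (T m) (T q)). pose proof (HT m q). rewrite (d_sym d Hm m (T m)) in *. lra. }
  pose proof (d_nonneg d Hm (T m) m). pose proof (d_nonneg d Hm m q).
  assert ((d m (T q)) ^ 2 <= (d m q) ^ 2 + delta * (2 * R0 + 1)).
  { apply (Rle_trans _ ((d (T m) m + d m q) ^ 2)); [apply pow_incr; split; [apply (d_nonneg d Hm)|lra]|].
    nra. }
  lra.
Qed.

(* Compare the Opial inequality towards an approximate projection [c] of [q] onto the
   hull with the variational inequality of [c], which holds at [mp n] by closure. *)
Lemma weak_cvg_in_hull q : weak_cvg d mp q -> closed_co d (orbit T p) q.
Proof.
  intros Hw. apply NNPP. intros Hout.
  destruct (not_closed_co_gap d _ _ Hout) as [eps0 [Heps0 Hfar]].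
  set (C := co d (orbit T p)) in *.
  destruct (approx_proj_convex d Hn C q p (co_convex d Hm Hgl Hn _) (traj_in_hull 0))
    as [D [HD0 [HD1 HD2]]].
  assert (HDpos : 0 < D).
  { destruct (HD2 (eps0 ^ 2 / 2)) as [c [Hc1 [Hc2 _]]]; [apply Rdiv_lt_0_compat; [apply pow_lt|]; lra|].
    pose proof (Hfar c Hc1). assert (eps0 ^ 2 <= (d q c) ^ 2) by (apply pow_incr; lra).
    pose proof (pow_lt eps0 2 Heps0). lra. }
  set (R0 := 2 * M + d p q).
  set (t := Rmin 1 (D / (4 * (R0 ^ 2 + 1)))).
  assert (Ht : 0 < t <= 1).
  { split; [apply Rmin_pos; [lra|apply Rdiv_lt_0_compat; nra]|apply Rmin_l]. }
  assert (HtR : t * R0 ^ 2 <= D / 4).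
  { apply (Rle_trans _ (D / (4 * (R0 ^ 2 + 1)) * (R0 ^ 2 + 1))).
    - apply Rmult_le_compat; [lra|nra|apply Rmin_r|lra].
    - right. field. nra. }
  destruct (HD2 (t * D / 4)) as [c [Hc1 [_ Hvar]]]; [apply Rdiv_lt_0_compat; nra|].
  destruct (weak_cvg_opial d Hm Hgl Hn mp q c R0 Hw (mp_bounded q) (D / 4)) as [N HN]; [lra|].
  set (n := Nat.max N 1). specialize (HN n ltac:(lia) ltac:(lia)).
  pose proof (mp_bounded q n ltac:(lia)) as Hbd. fold R0 in Hbd.
  assert (Hm1 : D + (1 - t) * (d c (mp n)) ^ 2 <= (d q (mp n)) ^ 2 + t * D / 4 / t).
  { apply (closure_ineq d Hm C); [lra|exact (mp_in_hull_closure n ltac:(lia))|].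
    intros w Hw'. apply Hvar; auto. }
  replace (t * D / 4 / t) with (D / 4) in Hm1 by (field; lra).
  pose proof (HD1 c Hc1). pose proof (d_nonneg d Hm (mp n) q).
  rewrite (d_sym d Hm c), (d_sym d Hm q) in Hm1.
  assert ((1 - t) * ((d (mp n) q) ^ 2 + D / 4) <= (1 - t) * (d (mp n) c) ^ 2)
    by (apply Rmult_le_compat_l; lra).
  assert (t * (d (mp n) q) ^ 2 <= t * R0 ^ 2)
    by (apply Rmult_le_compat_l; [lra|apply pow_incr; lra]).
  nra.
Qed.

End Orbit.

Theorem mainTheorem1 (X : Type) (d : X -> X -> R) (T : X -> X) :
  complete_NPC_space d -> nonexpansive d T -> distance_convex d T ->
  forall p q : X, bounded_orbit d T p ->
    let m := fun n : nat => m_n d T n p in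
    ((T q = q /\ closed_co d (orbit T p) q) <-> seq_cvg d m q) /\
    (seq_cvg d m q <-> weak_cvg d m q) /\
    (weak_cvg d m q <-> weak_cluster d m q).
Proof.
  intros [Hm [Hc [Hgl Hn]]] HT HDC p q [M HM] m.
  assert (i_ii : T q = q /\ closed_co d (orbit T p) q -> seq_cvg d m q).
  { intros [Hq Hcl]. exact (fixed_in_hull_seq_cvg d Hm Hc Hgl Hn T HT HDC p M HM q Hq Hcl). }
  assert (cluster_i : cluster d m q -> T q = q /\ closed_co d (orbit T p) q)
    by exact (cluster_fixed_in_hull d Hm Hc Hgl Hn T HT p M HM q).
  assert (iii_i : weak_cvg d m q -> T q = q /\ closed_co d (orbit T p) q).
  { intros Hw. split.
    - exact (weak_cvg_fixed d Hm Hc Hgl Hn T HT p M HM q Hw).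
    - exact (weak_cvg_in_hull d Hm Hc Hgl Hn T p M HM q Hw). }
  pose proof (seq_cvg_cluster d m q) as ii_cluster.
  pose proof (seq_cvg_weak_cvg d Hm Hn m q) as ii_iii.
  pose proof (seq_cvg_weak_cluster d Hm Hn m q) as ii_iv.
  pose proof (weak_cluster_cluster d Hm Hgl m q) as iv_cluster.
  split; [|split]; split; auto.
Qed.
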